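(* Let $\mathcal{M}=(S,A,\Delta,T)$ be a \~pMDP that is isomorphic to its MEC-quotient $\mathcal{M}_{/\mathrm{MEC}}$, with graph $(V,E)$. Then for every graph-preserving valuation $\mathsf{val}$ and every $(s,a)\in S\times A$ with $(s,a)\trianglelefteq (sE\setminus\{(s,a)\})$, we have $\max_\sigma \mathbb{P}^{s}_{\mathcal{M}^\sigma_{\mathsf{val}}}[\Diamond\mathit{fin}]=\max_{\sigma'}\mathbb{P}^{s}_{\mathcal{N}^{\sigma'}_{\mathsf{val}}}[\Diamond\mathit{fin}]$, where $\mathcal{N}=(S,A,\Delta\setminus\{(s,a,s')\in\Delta\mid s'\in S\},T)$ is obtained by removing all transitions of the pair $(s,a)$.
   Context: A \~pMDP is $(S,A,\Delta,T)$ with finite states $S$, actions $A$, targets $T=\{\mathit{fin},\mathit{fail}\}$ (no outgoing transitions), and transitions $\Delta\subseteq(S\setminus T)\times A\times S$. Graph: $V=S\cup((S\setminus T)\times A)$, edge $((s,a),s')$ iff $(s,a,s')\in\Delta$, edge $(s,(s,a))$ iff $(s,a,s')\in\Delta$ for some $s'\ne\mathit{fail}$; $vE$ is the successor set. A graph-preserving valuation $\mathsf{val}$ assigns to each state-action pair a full-support probability distribution on its $\Delta$-successors. A strategy and $\mathsf{val}$ induce a Markov chain $\mathcal{M}^\sigma_{\mathsf{val}}$; $\mathbb{P}^s[\Diamond\mathit{fin}]$ is the probability of reaching $\mathit{fin}$ from $s$. Values: $\mathrm{Rew}^*_{\mathsf{val}}(s)=\max_\sigma\mathbb{P}^s[\Diamond\mathit{fin}]$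 for states, and for $(s,a)$, $\mathrm{Rew}^*_{\mathsf{val}}((s,a))=\sum_{s'}\mathsf{val}_{(s,a)}(s')\mathrm{Rew}^*_{\mathsf{val}}(s')$. For $v\in V,W\subseteq V$: $v\trianglelefteq W$ iff for every graph-preserving $\mathsf{val}$ some $w\in W$ has $\mathrm{Rew}^*_{\mathsf{val}}(v)\le\mathrm{Rew}^*_{\mathsf{val}}(w)$. A sub-MDP is a pair $(P,B)$ with $P\subseteq S$, $B$ a set of pairs $(p,a)$ with $(p,(p,a))\in E$, such that every $p\in P$ has some $(p,a)\in B$ and every $\Delta$-successor of every $(p,a)\in B$ lies in $P$. An end component is a sub-MDP whose induced subgraph on $P\cup B$ is strongly connected; a MEC is an end component $(P,B)$ such that no other end component $(P',B')$ has $B\subseteq B'$. For $s\in S$, $[s]$ denotes $P$ if $s$ lies in a (unique) MEC $(P,B)$ and $\{s\}$ otherwise. The MEC-quotient is $\mathcal{M}_{/\mathrm{MEC}}=(S',A,\Delta',T')$ with $S'=\{[s]\mid s\in S\}$, $T'=\{[t]\mid t\in T\}$ and $\Delta'=\{([s],a,[s'])\mid (s,a,s')\in\Delta,\ [s]\neq[s']\}$. *)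

From HB Require Import structures.
From mathcomp Require Import all_boot all_order all_algebra.
From mathcomp Require Import classical_sets boolp reals.
Set Implicit Arguments. Unset Strict Implicit. Unset Printing Implicit Defensive.
Import Order.TTheory GRing.Theory Num.Theory.
Local Open Scope ring_scope.
Local Open Scope classical_set_scope.

(* A ~pMDP on finite states S and finite actions A with targets fin, fail is
   given by its transition relation d : S -> A -> S -> bool ((s,a,s') ∈ Δ). *)
Definition is_pMDP (S A : finType) (fin fail : S) (d : S -> A -> S -> bool) :=
  fin != fail /\ forall s a s', d s a s' -> (s != fin) && (s != fail).

Definition vertex (S A : finType) := (S + (S * A))%type.

Definition edge (S A : finType) (fail : S) (d : S -> A -> S -> bool)
  : rel (vertex S A) := fun u v =>
  match u, v with
  | inl s, inr (s0, a) => (s0 == s) && [exists s', d s a s' && (s' != fail)]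
  | inr (s, a), inl s' => d s a s'
  | _, _ => false
  end.

Definition succs (S A : finType) (fail : S) (d : S -> A -> S -> bool)
  (v : vertex S A) : {set vertex S A} := [set w | edge fail d v w].

Definition graph_preserving (R : realType) (S A : finType)
  (d : S -> A -> S -> bool) (val : S -> A -> S -> R) :=
  (forall s a s', d s a s' -> 0 < val s a s') /\
  (forall s a s', ~~ d s a s' -> val s a s' = 0) /\
  (forall s a, [exists s', d s a s'] -> \sum_(s' : S) val s a s' = 1).

Definition avail (S A : finType) (d : S -> A -> S -> bool) s a :=
  [exists s', d s a s'].

(* general (history-dependent, randomized) strategies: the history is the
   sequence of (state, action) pairs played so far, the current state is s *)
Definition is_strategy (R : realType) (S A : finType) (d : S -> A -> S -> bool)
  (sigma : seq (S * A) -> S -> A -> R) :=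
  forall h s,
    (forall a, 0 <= sigma h s a) /\
    (forall a, ~~ avail d s a -> sigma h s a = 0) /\
    ([exists a, avail d s a] -> \sum_(a : A) sigma h s a = 1).

Fixpoint reach_within (R : realType) (S A : finType) (fin : S)
  (d : S -> A -> S -> bool) (val : S -> A -> S -> R)
  (sigma : seq (S * A) -> S -> A -> R) (n : nat) (h : seq (S * A)) (s : S)
  : R :=
  match n with
  | 0 => (s == fin)%:R
  | n'.+1 =>
      if s == fin then 1 else
      \sum_(a : A) sigma h s a *
        \sum_(s' : S | d s a s') val s a s' *
            reach_within fin d val sigma n' (rcons h (s, a)) s'
  end.

(* P^s[◇fin] = measure of the union of the (disjoint) cylinders of paths
   reaching fin = sup over n of the probability of reaching fin within n steps *)
Definition Preach (R : realType) (S A : finType) (fin : S)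
  (d : S -> A -> S -> bool) (val : S -> A -> S -> R)
  (sigma : seq (S * A) -> S -> A -> R) (s : S) : R :=
  sup (range (fun n => reach_within fin d val sigma n [::] s)).

Definition RewS (R : realType) (S A : finType) (fin : S)
  (d : S -> A -> S -> bool) (val : S -> A -> S -> R) (s : S) : R :=
  sup [set x | exists sigma, is_strategy d sigma /\ x = Preach fin d val sigma s].

Definition RewV (R : realType) (S A : finType) (fin : S)
  (d : S -> A -> S -> bool) (val : S -> A -> S -> R) (v : vertex S A) : R :=
  match v with
  | inl s => RewS fin d val s
  | inr (s, a) => \sum_(s' : S) val s a s' * RewS fin d val s'
  end.

Definition trianglelefteq (R : realType) (S A : finType) (fin fail : S)
  (d : S -> A -> S -> bool) (v : vertex S A) (W : {set vertex S A}) :=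
  forall val : S -> A -> S -> R, graph_preserving d val ->
    exists2 w, w \in W & RewV fin d val v <= RewV fin d val w.

Definition is_subMDP (S A : finType) (fail : S) (d : S -> A -> S -> bool)
  (P : {set S}) (B : {set S * A}) : bool :=
  [forall p in P, exists a, (p, a) \in B] &&
  [forall pa in B, edge fail d (inl pa.1) (inr pa) &&
                   [forall s', d pa.1 pa.2 s' ==> (s' \in P)]].

Definition Vset (S A : finType) (P : {set S}) (B : {set S * A})
  : {set vertex S A} :=
  [set v | match v with inl s => s \in P | inr pa => pa \in B end].

Definition is_EC (S A : finType) (fail : S) (d : S -> A -> S -> bool)
  (P : {set S}) (B : {set S * A}) : bool :=
  is_subMDP fail d P B &&
  [forall u in Vset P B, forall v in Vset P B,
     connect (fun x y => [&& x \in Vset P B, y \in Vset P B & edge fail d x y]) u v].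

Definition is_MEC (S A : finType) (fail : S) (d : S -> A -> S -> bool)
  (P : {set S}) (B : {set S * A}) : bool :=
  is_EC fail d P B &&
  [forall P' : {set S}, forall B' : {set S * A},
     (is_EC fail d P' B' && (B \subset B')) ==> ((P', B') == (P, B))].

Definition cls (S A : finType) (fail : S) (d : S -> A -> S -> bool) (s : S)
  : {set S} :=
  if [pick PB : {set S} * {set S * A} | is_MEC fail d PB.1 PB.2 && (s \in PB.1)]
  is Some PB then PB.1 else [set s].

Definition quot_states (S A : finType) (fail : S) (d : S -> A -> S -> bool)
  : {set {set S}} := [set cls fail d s | s : S].

Definition quot_trans (S A : finType) (fail : S) (d : S -> A -> S -> bool)
  (X : {set S}) (a : A) (Y : {set S}) : bool :=
  [exists s, exists s',
     [&& cls fail d s == X, cls fail d s' == Y, d s a s' & X != Y]].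

Definition iso_to_quotient (S A : finType) (fin fail : S)
  (d : S -> A -> S -> bool) :=
  exists f : S -> {set S},
    [/\ injective f,
        (forall s, f s \in quot_states fail d),
        (forall X, X \in quot_states fail d -> exists s, f s = X),
        f fin = cls fail d fin /\ f fail = cls fail d fail &
        forall s a s', d s a s' = quot_trans fail d (f s) a (f s')].

Definition remove_pair (S A : finType) (d : S -> A -> S -> bool) (s : S) (a : A)
  : S -> A -> S -> bool :=
  fun x b y => d x b y && ~~ ((x == s) && (b == a)).

From HB Require Import structures.
From mathcomp Require Import all_boot all_order all_algebra.
From mathcomp Require Import classical_sets boolp reals.
From mathcomp Require Import fintype finset lra.
Set Implicit Arguments. Unset Strict Implicit. Unset Printing Implicit Defensive.
Import Order.TTheory GRing.Theory Num.Theory.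

(* Removing the transitions of (s, a) can only lower the optimal value.
   Conversely, the optimal value V of M satisfies V x <= Q(x, c) for a greedy
   enabled action c, and by the hypothesis on (s, a) some other action b of s
   has Q(s, b) >= Q(s, a); so there is a greedy positional strategy pi that
   never plays (s, a), i.e. lives in N.  Unrolling V <= Q(., pi) n times bounds
   V by the probability of reaching fin within n steps plus the probability of
   surviving n steps.  Since M is isomorphic to its MEC-quotient, no transition
   stays inside a MEC, so M has no end component with an action; a state that
   survives forever with probability one would span a pi-closed set, whose
   minimal closed subsets are such end components.  Hence survival decays
   geometrically and V is at most the value of pi in N. *)

Lemma connect_last_edge (T : finType) (e : rel T) x y :
  connect e x y -> x != y -> exists z, e z y.
Proof.
move=> /connectP [p e_p ->]; case/lastP: p e_p => [|p z] /=; first by rewrite eqxx.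
by rewrite rcons_path last_rcons => /andP [_ e_z] _; exists (last x p).
Qed.

Lemma connect_homo (T T' : finType) (f : T -> T') (r : rel T) (r' : rel T') :
  (forall x y, r x y -> connect r' (f x) (f y)) ->
  forall x y, connect r x y -> connect r' (f x) (f y).
Proof.
move=> hom x y /connectP [p pth ->]; elim: p x pth => [|z p IH] x /=.
  by move=> _; apply: connect0.
by case/andP => rxz /IH; apply: connect_trans (hom _ _ rxz).
Qed.

Lemma minimal_closed_connect (T : finType) (r : rel T) (D : {set T}) :
  (forall y z, y \in D -> r y z -> z \in D) ->
  (forall D' : {set T}, D' \subset D -> D' != set0 ->
     (forall y z, y \in D' -> r y z -> z \in D') -> D' = D) ->
  {in D &, forall y z, connect [rel u v | (u \in D) && r u v] y z}.
Proof.
move=> Dcl Dmin y z yD zD; set rD := [rel u v | _].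
have in_D w : connect rD y w -> w \in D.
  move=> yw; have [<- //|neq] := eqVneq y w.
  by have [u /andP [uD ruw]] := connect_last_edge yw neq; apply: Dcl ruw.
suff RyD : [set w | connect rD y w] = D by move: zD; rewrite -RyD inE.
apply: Dmin.
- by apply/subsetP => w; rewrite inE; apply: in_D.
- by apply/set0Pn; exists y; rewrite inE connect0.
move=> w w'; rewrite !inE => yw rww'.
by apply: (connect_trans yw (connect1 _)); rewrite /= (in_D _ yw).
Qed.

Section EndComponents.
Variables (S A : finType) (fail : S) (d : S -> A -> S -> bool).

Definition ec_rel (P : {set S}) (B : {set S * A}) : rel (vertex S A) :=
  fun u v => [&& u \in Vset P B, v \in Vset P B & edge fail d u v].

Lemma is_ECE (P : {set S}) (B : {set S * A}) : is_EC fail d P B <->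
  [/\ forall p, p \in P -> exists c, (p, c) \in B,
      forall pc, pc \in B -> edge fail d (inl pc.1) (inr pc),
      forall pc y, pc \in B -> d pc.1 pc.2 y -> y \in P &
      forall u v, u \in Vset P B -> v \in Vset P B -> connect (ec_rel P B) u v].
Proof.
split=> [|[P_act B_edge B_succ B_conn]].
  case/andP => /andP [/forall_inP P_act /forall_inP B_ok] /forall_inP conn; split.
  - by move=> p /P_act /existsP.
  - by move=> pc /B_ok /andP [].
  - by move=> pc y /B_ok /andP [_ /forallP /(_ y) /implyP].
  - by move=> u v /conn /forall_inP; apply.
apply/andP; split; first (apply/andP; split).
- by apply/forall_inP => p /P_act /existsP.
- apply/forall_inP => pc pcB; rewrite B_edge //=.
  by apply/forallP => y; apply/implyP; apply: B_succ.
- by apply/forall_inP => u uV; apply/forall_inP => v vV; apply: B_conn.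
Qed.

Lemma EC_pair_state (P : {set S}) (B : {set S * A}) p c :
  is_EC fail d P B -> (p, c) \in B -> p \in P.
Proof.
case/is_ECE => _ B_edge B_succ B_conn pcB.
have := B_edge _ pcB; rewrite /edge /= eqxx => /existsP [y /andP [dy _]].
have : connect (ec_rel P B) (inl y) (inr (p, c)).
  by apply: B_conn; rewrite inE ?(B_succ _ _ pcB).
case/connect_last_edge => // -[x|[q c']]; rewrite /ec_rel /= ?andbF //.
by rewrite inE => /and3P [xP _ /andP [/eqP ->]].
Qed.

Lemma EC_statesE (P : {set S}) (B : {set S * A}) :
  is_EC fail d P B -> P = [set pc.1 | pc in B].
Proof.
move=> EC; apply/setP => p; apply/idP/imsetP => [pP|[[q c] qcB ->]].
  by case/is_ECE: EC => /(_ p pP) [c pcB] _ _ _; exists (p, c).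
exact: EC_pair_state EC qcB.
Qed.

Lemma EC_setU (P1 P2 : {set S}) (B1 B2 : {set S * A}) z :
  is_EC fail d P1 B1 -> is_EC fail d P2 B2 -> z \in P1 -> z \in P2 ->
  is_EC fail d (P1 :|: P2) (B1 :|: B2).
Proof.
move=> /is_ECE [act1 edge1 succ1 conn1] /is_ECE [act2 edge2 succ2 conn2] zP1 zP2.
set e := ec_rel (P1 :|: P2) (B1 :|: B2).
have sub1 : subrel (ec_rel P1 B1) e.
  move=> u v /and3P [uV vV uv]; rewrite /e /ec_rel uv andbT {uv}.
  by move: uV vV; case: u => [?|?]; case: v => [?|?]; rewrite !inE => -> ->.
have sub2 : subrel (ec_rel P2 B2) e.
  move=> u v /and3P [uV vV uv]; rewrite /e /ec_rel uv andbT {uv}.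
  by move: uV vV; case: u => [?|?]; case: v => [?|?]; rewrite !inE => -> ->; rewrite !orbT.
have via_z u : u \in Vset (P1 :|: P2) (B1 :|: B2) ->
    connect e u (inl z) /\ connect e (inl z) u.
  have lift1 := connect_sub (fun u v uv => connect1 (sub1 u v uv)).
  have lift2 := connect_sub (fun u v uv => connect1 (sub2 u v uv)).
  have in1 w : w \in Vset P1 B1 -> connect e w (inl z) /\ connect e (inl z) w.
    by move=> wV; split; apply: lift1; apply: conn1; rewrite // inE.
  have in2 w : w \in Vset P2 B2 -> connect e w (inl z) /\ connect e (inl z) w.
    by move=> wV; split; apply: lift2; apply: conn2; rewrite // inE.
  by case: u => [x|pc]; rewrite !inE => /orP [] uV;
    [apply: in1 | apply: in2 | apply: in1 | apply: in2]; rewrite inE.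
apply/is_ECE; split.
- move=> p; rewrite inE => /orP [/act1|/act2] [c pcB]; exists c; by rewrite inE pcB ?orbT.
- by move=> pc; rewrite inE => /orP [/edge1|/edge2].
- move=> pc y; rewrite !inE => /orP [pcB /(succ1 _ _ pcB) -> //|pcB /(succ2 _ _ pcB) ->].
  by rewrite orbT.
- by move=> u v /via_z [uz _] /via_z [_ zv]; apply: connect_trans uz zv.
Qed.

Lemma is_MEC_maximal (P : {set S}) (B : {set S * A}) : is_MEC fail d P B ->
  is_EC fail d P B /\
  forall P' B', is_EC fail d P' B' -> B \subset B' -> P' = P /\ B' = B.
Proof.
case/andP => EC /forallP maxB; split => // P' B' EC' BB'.
by move: (maxB P') => /forallP /(_ B') /implyP; rewrite EC' BB' => /(_ isT) /eqP [-> ->].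
Qed.

Lemma MEC_states_eq (P1 P2 : {set S}) (B1 B2 : {set S * A}) z :
  is_MEC fail d P1 B1 -> is_MEC fail d P2 B2 -> z \in P1 -> z \in P2 -> P1 = P2.
Proof.
move=> /is_MEC_maximal [EC1 max1] /is_MEC_maximal [EC2 max2] zP1 zP2.
have ECU := EC_setU EC1 EC2 zP1 zP2.
have [U1 _] := max1 _ _ ECU (subsetUl _ _).
by have [U2 _] := max2 _ _ ECU (subsetUr _ _); rewrite -U1 U2.
Qed.

Lemma EC_sub_MEC (P : {set S}) (B : {set S * A}) : is_EC fail d P B ->
  exists P' B', is_MEC fail d P' B' /\ B \subset B'.
Proof.
move=> EC.
pose ext (PB : {set S} * {set S * A}) := is_EC fail d PB.1 PB.2 && (B \subset PB.2).
have extPB : ext (P, B) by rewrite /ext EC subxx.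
case: (arg_maxnP (fun PB : {set S} * {set S * A} => #|PB.2|) extPB).
move=> [P' B'] /andP /= [EC' BB'] maxB'; exists P', B'; split => //.
apply/andP; split => //; apply/forallP => P''; apply/forallP => B''.
apply/implyP => /andP [EC'' B'B''].
have /eqP eqB : B'' == B'.
  rewrite eq_sym eqEcard B'B'' /=; apply: (maxB' (P'', B'')).
  by rewrite /ext EC'' /= (subset_trans BB' B'B'').
by rewrite (EC_statesE EC'') (EC_statesE EC') eqB.
Qed.

Lemma cls_MEC (P : {set S}) (B : {set S * A}) x :
  is_MEC fail d P B -> x \in P -> cls fail d x = P.
Proof.
move=> MEC xP; rewrite /cls; case: pickP => [[P' B'] /andP /= [MEC' xP']|].
  exact: MEC_states_eq MEC' MEC xP' xP.
by move/(_ (P, B)); rewrite /= MEC xP.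
Qed.

Section ChoiceClosed.
Variable pi : S -> A.

Definition choice_closed (D : {set S}) :=
  [forall y in D, forall z, d y (pi y) z ==> (z \in D)].

Lemma choice_closedP (D : {set S}) :
  reflect (forall y z, y \in D -> d y (pi y) z -> z \in D) (choice_closed D).
Proof.
apply: (iffP forall_inP) => [cl y z /cl /forallP /(_ z) /implyP //|cl y yD].
by apply/forallP => z; apply/implyP; apply: cl.
Qed.

Lemma minimal_closed_EC (D : {set S}) :
  fail \notin D -> (forall y, y \in D -> exists z, d y (pi y) z) ->
  choice_closed D ->
  (forall D' : {set S}, D' \subset D -> D' != set0 -> choice_closed D' -> D' = D) ->
  is_EC fail d D [set (y, pi y) | y in D].
Proof.
move=> failD succ /choice_closedP Dcl Dmin.
set B := [set (y, pi y) | y in D]; set e := ec_rel D B.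
have yB y : y \in D -> (y, pi y) \in B by move=> yD; apply: imset_f.
have edge_choice y : y \in D -> edge fail d (inl y) (inr (y, pi y)).
  move=> yD; rewrite /edge eqxx /=; have [z dz] := succ y yD.
  by apply/existsP; exists z; rewrite dz; apply: contraNneq failD => <-; apply: Dcl dz.
have e_choice y : y \in D -> e (inl y) (inr (y, pi y)).
  by move=> yD; rewrite /e /ec_rel !inE yD yB ?edge_choice.
have e_succ y z : y \in D -> d y (pi y) z -> e (inr (y, pi y)) (inl z).
  by move=> yD dz; rewrite /e /ec_rel !inE yB //= (Dcl _ _ yD dz).
have e_step y z : y \in D -> d y (pi y) z -> connect e (inl y) (inl z).
  by move=> yD dz; apply: connect_trans (connect1 (e_choice _ yD)) (connect1 (e_succ _ _ yD dz)).
have strong y z : y \in D -> z \in D -> connect e (inl y) (inl z).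
  move=> yD zD; have Dmin' D' D'D D'0 D'cl := Dmin D' D'D D'0 (introT (choice_closedP D') D'cl).
  apply: (connect_homo _ (minimal_closed_connect Dcl Dmin' yD zD)) => u v /andP [uD duv].
  exact: e_step.
apply/is_ECE; split.
- by move=> p pD; exists (pi p); apply: yB.
- by move=> _ /imsetP [y yD ->]; apply: edge_choice.
- by move=> _ z /imsetP [y yD ->] /= dz; apply: Dcl dz.
have to_D u : u \in Vset D B -> exists2 y, y \in D & connect e u (inl y).
  case: u => [y|pc]; rewrite inE /= => uV.
    by exists y => //; apply: connect0.
  have /imsetP [y yD ->] := uV; have [z dz] := succ y yD.
  by exists z; [apply: Dcl dz | apply: connect1; apply: e_succ].
have from_D v : v \in Vset D B -> exists2 y, y \in D & connect e (inl y) v.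
  case: v => [y|pc]; rewrite inE /= => vV.
    by exists y => //; apply: connect0.
  have /imsetP [y yD ->] := vV.
  by exists y => //; apply: connect1; apply: e_choice.
move=> u v /to_D [y yD uy] /from_D [z zD zv].
exact: connect_trans uy (connect_trans (strong _ _ yD zD) zv).
Qed.

End ChoiceClosed.

End EndComponents.

Section NoEndComponent.
Variables (S A : finType) (fin fail : S) (d : S -> A -> S -> bool).
Hypothesis iso : iso_to_quotient fin fail d.

Lemma cls_inj : injective (cls fail d).
Proof.
case: iso => f [f_inj f_in f_onto _ _].
have statesE : quot_states fail d = [set f x | x : S].
  apply/setP => X; apply/idP/imsetP => [/f_onto [x <-]|[x _ ->]] //.
  by exists x.
have : #|quot_states fail d| == #|S| by rewrite statesE card_imset.
by move/imset_injP => cls_inj x y; apply: cls_inj.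
Qed.

Lemma transition_neq x c y : d x c y -> x != y.
Proof.
case: iso => f [_ _ _ _ ->] /existsP [_ /existsP [_ /and4P [_ _ _]]].
by apply: contra_neq => ->.
Qed.

Lemma EC_pairs0 (P : {set S}) (B : {set S * A}) : is_EC fail d P B -> B = set0.
Proof.
move=> EC; apply/eqP; apply/set0Pn => -[[x c] xcB].
have /is_ECE [_ B_edge _ _] := EC.
have := B_edge _ xcB; rewrite /edge /= eqxx => /existsP [y /andP [dxy _]].
have [P' [B' [MEC BB']]] := EC_sub_MEC EC.
have xcB' : (x, c) \in B' by apply: (subsetP BB').
have [EC' _] := is_MEC_maximal MEC.
have /is_ECE [_ _ B'_succ _] := EC'.
have xP' : x \in P' := EC_pair_state EC' xcB'.
have yP' : y \in P' := B'_succ _ _ xcB' dxy.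
have /cls_inj eq_xy : cls fail d x = cls fail d y by rewrite !(cls_MEC MEC).
by move: (transition_neq dxy); rewrite eq_xy eqxx.
Qed.

Lemma choice_closed_set0 (pi : S -> A) (C : {set S}) :
  fail \notin C -> (forall y, y \in C -> exists z, d y (pi y) z) ->
  choice_closed d pi C -> C = set0.
Proof.
move=> failC succ Ccl; apply/eqP; apply: contraT => C0.
pose good (D : {set S}) := [&& D \subset C, D != set0 & choice_closed d pi D].
have goodC : good C by rewrite /good subxx C0.
have [D /and3P [DC D0 Dcl] Dmin] := arg_minnP (fun D : {set S} => #|D|) goodC.
have EC : is_EC fail d D [set (y, pi y) | y in D].
  apply: minimal_closed_EC Dcl _ => [||D' D'D D'0 D'cl].
  - by apply: contra failC; apply: (subsetP DC).
  - by move=> y yD; apply/succ/(subsetP DC).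
  apply/eqP; rewrite eqEcard D'D; apply: Dmin.
  by rewrite /good (subset_trans D'D DC) D'0.
have [y yD] := set0Pn _ D0.
by move: (EC_pairs0 EC) => /setP /(_ (y, pi y)); rewrite inE imset_f.
Qed.

End NoEndComponent.

Local Open Scope ring_scope.

Lemma expr_bernoulli_le1 (R : realDomainType) (c : R) k :
  0 <= c <= 1 -> c ^+ k * (1 + k%:R * (1 - c)) <= 1.
Proof.
case/andP => c0 c1; elim: k => [|k IH]; first by rewrite expr0 mul0r addr0 mul1r.
have ck0 : 0 <= c ^+ k := exprn_ge0 k c0.
have ck1 : c ^+ k <= 1 := exprn_ile1 k c0 c1.
have scaled : c * (c ^+ k * (1 + k%:R * (1 - c))) <= c by rewrite ler_piMr.
have tail : c * c ^+ k * (1 - c) <= 1 - c.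
  by rewrite ler_piMl ?subr_ge0 // mulr_ile1.
rewrite exprS -natr1; nra.
Qed.

Lemma expr_le_small (R : archiRealFieldType) (c e : R) :
  0 <= c < 1 -> 0 < e -> exists k, c ^+ k <= e.
Proof.
move=> /andP [c0 c1] e0; have q0 : 0 < e * (1 - c) by rewrite mulr_gt0 // subr_gt0.
have inv_ge0 : 0 <= (e * (1 - c))^-1 by rewrite invr_ge0 ltW.
have k_gt := archi_boundP inv_ge0; set k := Num.Def.archi_bound _ in k_gt; exists k.
have bernoulli : c ^+ k * (1 + k%:R * (1 - c)) <= 1 by rewrite expr_bernoulli_le1 // c0 ltW.
have := k_gt; rewrite -(ltr_pM2r q0) mulVf ?lt0r_neq0 //.
have p_gt0 : 0 < k%:R * (1 - c) by rewrite mulr_gt0 ?subr_gt0 // (le_lt_trans inv_ge0 k_gt).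
have := exprn_ge0 k c0; set p := k%:R * (1 - c) in bernoulli p_gt0 *.
set ck := c ^+ k in bernoulli *.
have -> : k%:R * (e * (1 - c)) = p * e by rewrite /p mulrCA mulrC.
nra.
Qed.

Lemma convex_eq1 (R : numDomainType) (I : finType) (P : pred I) (w f : I -> R) :
  (forall i, P i -> 0 < w i) -> (forall i, f i <= 1) ->
  \sum_(i | P i) w i = 1 -> \sum_(i | P i) w i * f i = 1 -> forall i, P i -> f i = 1.
Proof.
move=> w_gt0 f_le1 w_sum wf_sum.
have : \sum_(i | P i) w i * (1 - f i) = 0.
  by under eq_bigr do rewrite mulrBr mulr1; rewrite sumrB w_sum wf_sum subrr.
have ge0 j : P j -> 0 <= w j * (1 - f j).
  by move=> Pj; rewrite mulr_ge0 ?subr_ge0 // ltW // w_gt0.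
move/(psumr_eq0P ge0) => eq0 i Pi; have /eqP := eq0 i Pi.
by rewrite mulf_eq0 gt_eqF ?w_gt0 //= subr_eq0 eq_sym => /eqP.
Qed.

Definition qvalue (R : pzSemiRingType) (S A : finType) (val : S -> A -> S -> R)
  (V : S -> R) (x : S) (c : A) : R := \sum_y val x c y * V y.

Section GraphPreserving.
Variables (R : realType) (S A : finType) (d : S -> A -> S -> bool)
  (val : S -> A -> S -> R).
Hypothesis val_gp : graph_preserving d val.

Lemma gp_ge0 x c y : 0 <= val x c y.
Proof.
by case: val_gp => gt0 [eq0 _]; have [/gt0/ltW|/eq0 ->] := boolP (d x c y).
Qed.

Lemma gp_sum1 x c : avail d x c -> \sum_(y | d x c y) val x c y = 1.
Proof.
case: val_gp => _ [eq0 sum1] /sum1 <-.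
by rewrite [RHS](bigID (d x c)) /= [X in _ = _ + X]big1 ?addr0 // => y /eq0.
Qed.

Lemma gp_qvalueE (V : S -> R) x c :
  qvalue val V x c = \sum_(y | d x c y) val x c y * V y.
Proof.
case: val_gp => _ [eq0 _].
by rewrite /qvalue (bigID (d x c)) /= [X in _ + X]big1 ?addr0 // => y /eq0 ->; rewrite mul0r.
Qed.

End GraphPreserving.

Section Reachability.
Variables (R : realType) (S A : finType) (fin : S) (d : S -> A -> S -> bool)
  (val : S -> A -> S -> R).
Hypothesis val_ge0 : forall x c y, 0 <= val x c y.
Hypothesis val_sum1 : forall x c, avail d x c -> \sum_(y | d x c y) val x c y = 1.

Local Notation strategy := (seq (S * A) -> S -> A -> R).
Local Notation reach := (reach_within fin d val).
Local Notation Preach := (Preach fin d val).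
Local Notation RewS := (RewS fin d val).

Lemma strategy_sum_le1 (sg : strategy) h x : is_strategy d sg -> \sum_c sg h x c <= 1.
Proof.
move=> /(_ h x) [_ [off sum1]].
have [/sum1 -> //|/existsPn none] := boolP [exists c, avail d x c].
by rewrite big1 // => c _; apply: off.
Qed.

Lemma reach_within_bounds (sg : strategy) n h x :
  is_strategy d sg -> 0 <= reach sg n h x <= 1.
Proof.
move=> sgP; elim: n h x => [|n IH] h x /=; first by case: (x == fin); rewrite ?lexx ?ler01.
case: (x == fin); first by rewrite ler01 lexx.
have [sg_ge0 [sg_off _]] := sgP h x.
apply/andP; split.
  apply: sumr_ge0 => c _; apply: mulr_ge0 => //; apply: sumr_ge0 => y _.
  by apply: mulr_ge0 => //; case/andP: (IH (rcons h (x, c)) y).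
apply: le_trans (strategy_sum_le1 h x sgP); apply: ler_sum => c _.
have [av|nav] := boolP (avail d x c); last by rewrite sg_off // mul0r.
rewrite ler_piMr // -(val_sum1 av); apply: ler_sum => y _.
by rewrite ler_piMr //; case/andP: (IH (rcons h (x, c)) y).
Qed.

Lemma reach_within_cat (sg : strategy) h0 n h x :
  reach sg n (h0 ++ h) x = reach (fun h' => sg (h0 ++ h')) n h x.
Proof.
elim: n h x => //= n IH h x; case: (x == fin) => //.
by apply: eq_bigr => c _; congr (_ * _); apply: eq_bigr => y _; rewrite -IH rcons_cat.
Qed.

Definition pick_strategy : strategy :=
  fun _ x c => ([pick c' | avail d x c'] == Some c)%:R.

Lemma pick_strategyP : is_strategy d pick_strategy.
Proof.
move=> h x; rewrite /pick_strategy; split=> [c|]; first by rewrite ler0n.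
split=> [c nav|/existsP [c0 av0]].
  by case: pickP => [c' av'|//]; case: eqP => // -[eq_c]; rewrite -eq_c av' in nav.
case: pickP => [c' av'|/(_ c0)]; last by rewrite av0.
rewrite (bigD1 c') //= eqxx big1 ?addr0 // => c /negbTE neq.
by case: eqP => // -[eq_c]; rewrite eq_c eqxx in neq.
Qed.

Lemma reach_le_Preach (sg : strategy) n x :
  is_strategy d sg -> reach sg n [::] x <= Preach sg x.
Proof.
move=> sgP; apply: ub_le_sup; last by exists n.
by exists 1 => _ [m _ <-]; case/andP: (reach_within_bounds m [::] x sgP).
Qed.

Lemma Preach_le (sg : strategy) x r :
  (forall n, reach sg n [::] x <= r) -> Preach sg x <= r.
Proof. by move=> le_r; apply: ge_sup => [|_ [n _ <-]//]; exists (reach sg 0 [::] x), 0%N. Qed.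

Lemma Preach_bounds (sg : strategy) x : is_strategy d sg -> 0 <= Preach sg x <= 1.
Proof.
move=> sgP; have [ge0 _] := andP (reach_within_bounds 0 [::] x sgP).
rewrite (le_trans ge0 (reach_le_Preach 0 x sgP)) /=.
by apply: Preach_le => n; case/andP: (reach_within_bounds n [::] x sgP).
Qed.

Lemma Preach_le_RewS (sg : strategy) x : is_strategy d sg -> Preach sg x <= RewS x.
Proof.
move=> sgP; apply: ub_le_sup; last by exists sg.
by exists 1 => _ [sg' [sg'P ->]]; case/andP: (Preach_bounds x sg'P).
Qed.

Lemma RewS_le x r : (forall sg, is_strategy d sg -> Preach sg x <= r) -> RewS x <= r.
Proof.
move=> le_r; apply: ge_sup => [|_ [sg [sgP ->]]]; last exact: le_r.
by exists (Preach pick_strategy x), pick_strategy; split => //; apply: pick_strategyP.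
Qed.

Lemma RewS_bounds x : 0 <= RewS x <= 1.
Proof.
have [ge0 _] := andP (Preach_bounds x pick_strategyP).
rewrite (le_trans ge0 (Preach_le_RewS x pick_strategyP)) /=.
by apply: RewS_le => sg sgP; case/andP: (Preach_bounds x sgP).
Qed.

Definition live x := [exists c, avail d x c].

Lemma RewS_stuck x : x != fin -> ~~ live x -> RewS x = 0.
Proof.
move=> xfin /existsPn none; apply/eqP; rewrite eq_le (proj1 (andP (RewS_bounds x))) andbT.
apply: RewS_le => sg _; apply: Preach_le => -[|n] /=; rewrite (negbTE xfin) //.
rewrite big1 // => c _; rewrite big1 ?mulr0 // => y dy.
by have /existsPn /(_ y) := none c; rewrite dy.
Qed.

Lemma RewS_le_qvalue x : x != fin -> live x ->
  exists2 c, avail d x c & RewS x <= qvalue val RewS x c.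
Proof.
move=> xfin /existsP [c0 av0].
have [c avc c_max] := arg_maxP (fun c => qvalue val RewS x c) av0.
exists c => //; apply: RewS_le => sg sgP; apply: Preach_le => -[|n] /=.
  rewrite (negbTE xfin) sumr_ge0 // => y _.
  by rewrite mulr_ge0 //; case/andP: (RewS_bounds y).
rewrite (negbTE xfin); have [sg_ge0 [sg_off sg_sum1]] := sgP [::] x.
rewrite -[X in _ <= X]mul1r -(sg_sum1 _); last by apply/existsP; exists c0.
rewrite mulr_suml; apply: ler_sum => c' _.
have [av|nav] := boolP (avail d x c'); last by rewrite sg_off // !mul0r.
apply: ler_wpM2l => //; apply: le_trans (c_max c' av).
rewrite /qvalue [X in _ <= X](bigID (d x c')) /= -[X in X <= _]addr0.
apply: lerD; last by apply: sumr_ge0 => y _; rewrite mulr_ge0 //; case/andP: (RewS_bounds y).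
apply: ler_sum => y _; apply: ler_wpM2l => //.
have sg'P : is_strategy d (fun h => sg ([:: (x, c')] ++ h)) by move=> h; apply: sgP.
have := reach_within_cat sg [:: (x, c')] n [::] y; rewrite cats0 => ->.
exact: le_trans (reach_le_Preach n y sg'P) (Preach_le_RewS y sg'P).
Qed.

Section Positional.
Variable pi : S -> A.

Hypothesis pi_avail : forall x, live x -> avail d x (pi x).

Definition positional : strategy := fun _ x c => ((c == pi x) && live x)%:R.

Lemma positionalP : is_strategy d positional.
Proof.
move=> h x; rewrite /positional; split=> [c|]; first by rewrite ler0n.
split=> [c nav|lx].
  by apply/eqP; rewrite pnatr_eq0 eqb0; apply: contra nav => /andP [/eqP -> /pi_avail].
rewrite (bigD1 (pi x)) //= eqxx /live lx big1 ?addr0 // => c /negbTE neq.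
by rewrite neq.
Qed.

Lemma reach_positional n h x : x != fin -> live x ->
  reach positional n.+1 h x =
  \sum_(y | d x (pi x) y) val x (pi x) y * reach positional n (rcons h (x, pi x)) y.
Proof.
move=> xfin lx; rewrite /= (negbTE xfin) (bigD1 (pi x)) //= [X in _ + X]big1 ?addr0.
  by rewrite /positional eqxx lx mul1r.
by move=> c /negbTE neq; rewrite /positional neq mul0r.
Qed.

Fixpoint survive n x : R :=
  (live x)%:R * (if n is n'.+1 then
    \sum_(y | d x (pi x) y) val x (pi x) y * survive n' y else 1).

Lemma survive_stuck n x : ~~ live x -> survive n x = 0.
Proof. by move/negbTE => nlx; case: n => [|n] /=; rewrite nlx mul0r. Qed.

Lemma survive_bounds n x : 0 <= survive n x <= 1.
Proof.
elim: n x => [|n IH] x; have [lx|/survive_stuck -> //] := boolP (live x); rewrite ?lexx ?ler01 //=.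
  by rewrite lx mulr1 ler01 lexx.
rewrite lx mul1r sumr_ge0 => [|y _]; last by rewrite mulr_ge0 //; case/andP: (IH y).
rewrite -(val_sum1 (pi_avail lx)) ler_sum // => y _.
by rewrite ler_piMr //; case/andP: (IH y).
Qed.

Lemma survive_le m n x : (m <= n)%N -> survive n x <= survive m x.
Proof.
have step k : forall y, survive k.+1 y <= survive k y.
  elim: k => [|k IH] y; have [ly|nly] := boolP (live y); try by rewrite !survive_stuck.
    by rewrite [X in _ <= X]/= ly mulr1; case/andP: (survive_bounds 1 y).
  rewrite [survive k.+2 y]/= [survive k.+1 y]/= ler_wpM2l ?ler0n //.
  by apply: ler_sum => z _; rewrite ler_wpM2l ?IH.
by move/subnK <-; elim: (n - m)%N => // k IH; apply: le_trans (step _ x) IH.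
Qed.

Lemma survive_addn_le m r : 0 <= r -> (forall y, survive m y <= r) ->
  forall n x, survive (n + m) x <= r * survive n x.
Proof.
move=> r0 le_r; elim=> [|n IH] x; have [lx|nlx] := boolP (live x);
  try by rewrite !survive_stuck ?mulr0.
  by rewrite add0n [survive 0 x]/= lx mulr1 mulr1n mulr1.
rewrite addSn /= [X in _ <= X]mulrCA ler_wpM2l ?ler0n // mulr_sumr.
by apply: ler_sum => y _; rewrite mulrCA ler_wpM2l ?IH.
Qed.

Lemma survive_geometric m r : 0 <= r -> (forall y, survive m y <= r) ->
  forall k x, survive (k * m) x <= r ^+ k.
Proof.
move=> r0 le_r; elim=> [|k IH] x; first by rewrite mul0n expr0; case/andP: (survive_bounds 0 x).
rewrite mulSn addnC exprS; apply: le_trans (survive_addn_le r0 le_r _ x) _.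
by rewrite ler_wpM2l.
Qed.

Lemma le_reach_survive (V : S -> R) :
  (forall x, V x <= 1) -> (forall x, x != fin -> ~~ live x -> V x = 0) ->
  (forall x, x != fin -> live x ->
     V x <= \sum_(y | d x (pi x) y) val x (pi x) y * V y) ->
  forall n h x, V x <= reach positional n h x + survive n x.
Proof.
move=> V_le1 V_stuck V_bellman n h x.
elim: n h x => [|n IH] h x; have [->|xfin] := eqVneq x fin.
- rewrite /= eqxx (le_trans (V_le1 _)) // lerDl; by case/andP: (survive_bounds 0 fin).
- have [lx|nlx] := boolP (live x); rewrite /= (negbTE xfin) add0r.
    by rewrite lx mulr1.
  by rewrite (negbTE nlx) mul0r V_stuck.
- rewrite /= eqxx (le_trans (V_le1 _)) // lerDl; by case/andP: (survive_bounds n.+1 fin).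
have [lx|nlx] := boolP (live x); last first.
  rewrite V_stuck // survive_stuck // addr0.
  by case/andP: (reach_within_bounds n.+1 h x positionalP).
rewrite reach_positional // [survive _ x]/= lx mul1r -big_split /=.
apply: le_trans (V_bellman x xfin lx) _; apply: ler_sum => y _.
by rewrite -mulrDr ler_wpM2l.
Qed.

Section NoClosedSet.
Hypothesis val_gt0 : forall x c y, d x c y -> 0 < val x c y.
Hypothesis no_closed : forall C : {set S},
  (forall y, y \in C -> live y) -> choice_closed d pi C -> C = set0.

Lemma survive_lt1 x : exists n, survive n x < 1.
Proof.
apply/not_existsP => never_lt1.
have always1 y : (forall n, ~ survive n y < 1) -> forall n, survive n y = 1.
  move=> not_lt1 n; have /andP [_] := survive_bounds n y.
  by rewrite le_eqVlt => /orP [/eqP //|/not_lt1].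
pose C := [set y | `[< forall n, survive n y = 1 >]].
have inC y : y \in C <-> forall n, survive n y = 1 by rewrite inE; split => /asboolP.
have C_live y : y \in C -> live y.
  by move=> /inC /(_ 0%N) /=; rewrite mulr1 => /eqP; rewrite pnatr_eq1; case: (live y).
have C_closed : choice_closed d pi C.
  apply/choice_closedP => y z /inC yC dz; apply/inC => n.
  have ly := C_live y (proj2 (inC y) yC).
  have := yC n.+1; rewrite /= ly mul1r => sum1.
  apply: (convex_eq1 (P := d y (pi y)) (w := val y (pi y))) sum1 _ dz => //.
  - by move=> w; apply: val_gt0.
  - by move=> w; case/andP: (survive_bounds n w).
  exact: val_sum1 (pi_avail ly).
suff : x \in C by rewrite (no_closed C_live C_closed) in_set0.
exact/inC/always1.
Qed.

Lemma survive_small e : 0 < e -> exists n, forall x, survive n x <= e.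
Proof.
move=> e0; have [N N_lt1] := fin_all_exists survive_lt1.
pose m := (\max_(y : S) N y)%N.
have lt1 y : survive m y < 1.
  exact: le_lt_trans (survive_le y (leq_bigmax y)) (N_lt1 y).
have [ymax _ ymax_max] := @arg_maxP _ _ _ fin xpredT (survive m) isT.
have r0 : 0 <= survive m ymax by case/andP: (survive_bounds m ymax).
have [k rk] : exists k, survive m ymax ^+ k <= e by apply: expr_le_small; rewrite ?r0 ?lt1.
exists (k * m)%N => x; apply: le_trans rk.
by apply: survive_geometric => // y; apply: ymax_max.
Qed.

Lemma le_Preach_positional (V : S -> R) :
  (forall x, V x <= 1) -> (forall x, x != fin -> ~~ live x -> V x = 0) ->
  (forall x, x != fin -> live x ->
     V x <= \sum_(y | d x (pi x) y) val x (pi x) y * V y) ->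
  forall x, V x <= Preach positional x.
Proof.
move=> V_le1 V_stuck V_bellman x; apply/ler_addgt0Pr => e e0.
have [n small] := survive_small e0.
apply: le_trans (le_reach_survive V_le1 V_stuck V_bellman n [::] x) _.
by apply: lerD; [apply: reach_le_Preach; apply: positionalP | apply: small].
Qed.

End NoClosedSet.
End Positional.
End Reachability.

Section RemovePair.
Variables (R : realType) (S A : finType) (fin fail : S) (d : S -> A -> S -> bool)
  (val : S -> A -> S -> R) (s : S) (a : A).

Local Notation d' := (remove_pair d s a).
Local Notation V := (RewS fin d val).
Local Notation V' := (RewS fin d' val).

Lemma remove_pairE x c : ~~ ((x == s) && (c == a)) -> d' x c =1 d x c.
Proof. by move=> neq y; rewrite /remove_pair neq andbT. Qed.

Lemma avail_remove_pair x c :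
  avail d' x c = avail d x c && ~~ ((x == s) && (c == a)).
Proof.
rewrite andbC; case sa: ((x == s) && (c == a)) => /=.
  by apply/existsP => -[y]; rewrite /remove_pair sa andbF.
by apply: eq_existsb => y; rewrite /remove_pair sa andbT.
Qed.

Lemma avail_remove_pairW x c : avail d' x c -> avail d x c.
Proof. by rewrite avail_remove_pair => /andP []. Qed.

Lemma remove_pair_availE x c : avail d' x c -> d' x c =1 d x c.
Proof. by rewrite avail_remove_pair => /andP [_ /remove_pairE]. Qed.

Variable b : A.
Hypotheses (b_neq_a : b != a) (b_avail : avail d s b).

Lemma live_remove_pair x : live d' x = live d x.
Proof.
apply/existsP/existsP => [[c /avail_remove_pairW]|[c av]]; first by exists c.
case sa: ((x == s) && (c == a)); last by exists c; rewrite avail_remove_pair av sa.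
by exists b; case/andP: sa => /eqP -> _; rewrite avail_remove_pair b_avail eqxx (negbTE b_neq_a).
Qed.

Lemma is_strategy_remove_pair (sg : seq (S * A) -> S -> A -> R) :
  is_strategy d' sg -> is_strategy d sg.
Proof.
move=> sgP h x; have [ge0 [off sum1]] := sgP h x; split=> //; split.
  by move=> c nav; apply: off; rewrite avail_remove_pair (negbTE nav).
by move=> lx; apply: sum1; rewrite [X in is_true X]live_remove_pair.
Qed.

Lemma reach_within_remove_pair sg n h x : is_strategy d' sg ->
  reach_within fin d' val sg n h x = reach_within fin d val sg n h x.
Proof.
move=> sgP; elim: n h x => //= n IH h x; case: (x == fin) => //.
apply: eq_bigr => c _; have [av|nav] := boolP (avail d' x c); last first.
  by have [_ [off _]] := sgP h x; rewrite off // !mul0r.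
by rewrite (eq_bigl _ _ (remove_pair_availE av)); congr (_ * _); apply: eq_bigr => y _; rewrite IH.
Qed.

Hypothesis val_gp : graph_preserving d val.

Let val_ge0 := gp_ge0 val_gp.
Let val_sum1 := gp_sum1 val_gp.

Lemma val_sum1_remove_pair x c : avail d' x c -> \sum_(y | d' x c y) val x c y = 1.
Proof.
by move=> av; rewrite (eq_bigl _ _ (remove_pair_availE av)) val_sum1 ?avail_remove_pairW.
Qed.

Lemma RewS_remove_pair_le x : V' x <= V x.
Proof.
apply: RewS_le => sg sgP.
have -> : Preach fin d' val sg x = Preach fin d val sg x.
  by rewrite /Preach (funext (fun n => reach_within_remove_pair n [::] x sgP)).
apply: (Preach_le_RewS fin val_ge0 val_sum1 x).
exact: is_strategy_remove_pair sgP.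
Qed.

Hypotheses (pMDP : is_pMDP fin fail d) (iso : iso_to_quotient fin fail d).
Hypothesis qvalue_le : qvalue val V s a <= qvalue val V s b.

Lemma avail_neq_fin x c : avail d x c -> x != fin.
Proof. by case/existsP => y; case: pMDP => _ /[apply] /andP []. Qed.

Lemma live_neq_fail x : live d x -> x != fail.
Proof. by case/existsP => c /existsP [y]; case: pMDP => _ /[apply] /andP []. Qed.

Lemma greedy_action_remove_pair x : exists c, live d' x ->
  avail d' x c /\ V x <= qvalue val V x c.
Proof.
have [lx|_] := boolP (live d' x); last by exists a.
have /existsP [c0 /avail_remove_pairW /avail_neq_fin xfin] := lx.
rewrite live_remove_pair in lx.
have [c av le_c] := RewS_le_qvalue val_ge0 val_sum1 xfin lx.
case sa: ((x == s) && (c == a)); last by exists c => _; rewrite avail_remove_pair av sa.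
(* the removed pair is the greedy one: play b instead, which is at least as good *)
case/andP: sa => /eqP -> /eqP -> in le_c *; exists b => _.
by rewrite avail_remove_pair b_avail eqxx (negbTE b_neq_a) (le_trans le_c).
Qed.

Lemma RewS_remove_pair x : V' x = V x.
Proof.
apply/eqP; rewrite eq_le RewS_remove_pair_le /=.
have [pi pi_greedy] := fin_all_exists greedy_action_remove_pair.
have pi_avail y : live d' y -> avail d' y (pi y) by move/pi_greedy => [].
apply: le_trans (Preach_le_RewS fin val_ge0 val_sum1_remove_pair x (positionalP R pi_avail)).
apply: (le_Preach_positional val_ge0 val_sum1_remove_pair pi_avail).
- by move=> y c z /andP [dz _]; case: val_gp => gt0 _; apply: gt0.
- move=> C C_live /choice_closedP C_closed; apply: (choice_closed_set0 iso (pi := pi)).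
  + by apply/negP => /C_live; rewrite live_remove_pair => /live_neq_fail; rewrite eqxx.
  + by move=> y /C_live /pi_avail /avail_remove_pairW /existsP [z dz]; exists z.
  apply/choice_closedP => y z yC dz; apply: (C_closed _ _ yC).
  by rewrite (remove_pair_availE (pi_avail _ (C_live _ yC))).
- by move=> y; case/andP: (RewS_bounds fin val_ge0 val_sum1 y).
- by move=> y yfin; rewrite live_remove_pair; apply: RewS_stuck.
move=> y _ ly; have [av le_y] := pi_greedy y ly.
by rewrite (eq_bigl _ _ (remove_pair_availE av)) -(gp_qvalueE val_gp).
Qed.

End RemovePair.

Theorem theorem6 (R : realType) (S A : finType) (fin fail : S)
  (d : S -> A -> S -> bool)
  (HM : is_pMDP fin fail d)
  (Hiso : iso_to_quotient fin fail d)
  (val : S -> A -> S -> R) (Hval : graph_preserving d val)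
  (s : S) (a : A)
  (Htri : @trianglelefteq R S A fin fail d (inr (s, a))
            (succs fail d (inl s) :\ inr (s, a))) :
  RewS fin d val s = RewS fin (remove_pair d s a) val s.
Proof.
have [w] := Htri val Hval; rewrite !inE => /andP [].
case: w => [x|[x b]] //= neq_sa /andP [/eqP eq_x /existsP [y /andP [dy _]]] le_b.
subst x; have b_neq_a : b != a by apply: contraNneq neq_sa => ->.
have b_avail : avail d s b by apply/existsP; exists y.
by rewrite (RewS_remove_pair b_neq_a b_avail Hval HM Hiso le_b).
Qed.
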